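(* Let $N^h\ge 2$ be an integer and $h=1/N^h$. Let $\lambda_j=j^2\pi^2$ be the $j$-th exact eigenvalue of $-u''=\lambda u$ on $(0,1)$ with $u(0)=u(1)=0$, and let $\lambda^h_{sq,j}$ be the $j$-th approximate eigenvalue (eigenvalues sorted in nondecreasing order, counting multiplicity) of the linear SoftFEMBQ generalized matrix eigenvalue problem $(\mathbf{K}-\eta_K\mathbf{S})\mathbf{U}=\lambda^h(\alpha\mathbf{M}_G+(1-\alpha)\mathbf{M}_L)\mathbf{U}$ described in the context, with $\eta_K=\frac{1}{20}$ and $\alpha=\frac45$. Then \[ \frac{|\lambda^h_{sq,j}-\lambda_j|}{\lambda_j}<\frac{1}{1440}(j\pi h)^6\qquad\text{for all } j\in\{1,\dots,N^h-1\}. \]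
   Context: Setting (linear finite elements, SoftFEM with blended quadrature, in 1D): Let $x_k=kh$, $k=0,\dots,N^h$, be a uniform mesh of $[0,1]$. Let $V^h$ be the space of continuous functions on $[0,1]$ that are affine on each $[x_{k-1},x_k]$ and vanish at $0$ and $1$, with hat basis $\phi_k$, $k=1,\dots,N^h-1$, $\phi_k(x_l)=\delta_{kl}$. For $v\in V^h$ and an interior node $x_k$ let $[\![v']\!](x_k)=v'(x_k^-)-v'(x_k^+)$. Define $a(v,w)=\int_0^1 v'w'\,dx$, $s(v,w)=\sum_{k=1}^{N^h-1} h\,[\![v']\!](x_k)[\![w']\!](x_k)$, $\mathbf{K}_{kl}=a(\phi_l,\phi_k)$, $\mathbf{S}_{kl}=s(\phi_l,\phi_k)$. $\mathbf{M}_G$ is the mass matrix $\int_0^1\phi_l\phi_k\,dx$ computed elementwise by the 2-point Gauss–Legendre rule, and $\mathbf{M}_L$ the one computed by the 2-point Gauss–Lobatto (trapezoidal) rule. Explicitly, $\mathbf{K}=\frac1h\,\mathrm{tridiag}(-1,2,-1)$, $\mathbf{M}_G=h\,\mathrm{tridiag}(\tfrac16,\tfrac23,\tfrac16)$, $\mathbf{M}_L=h\,\mathbf{I}$, and $\mathbf{S}=\frac1h$ times the symmetric pentadiagonal matrix with rows $(1,-4,6,-4,1)$ except that the first and last diagonal entries are $5$; all are $(N^h-1)\times(N^h-1)$. *)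

From HB Require Import structures.
From mathcomp Require Import all_boot all_order all_algebra.
From mathcomp Require Import reals trigo.
Set Implicit Arguments. Unset Strict Implicit. Unset Printing Implicit Defensive.
Import Order.TTheory GRing.Theory Num.Theory.
Local Open Scope ring_scope.

Section Defs.
Variable R : realType.

Definition tridiag (n : nat) (a b : R) : 'M[R]_n :=
  \matrix_(i, j) (if i == j then a
                  else if ((i : nat) == j.+1) || ((j : nat) == i.+1) then b else 0).

(* Interior nodes x_1..x_{N-1} are indexed by 'I_(N.-1) (index i <-> node i+1). *)
Definition hmesh (N : nat) : R := (N%:R)^-1.

Definition Tmat (N : nat) : 'M[R]_(N.-1) := tridiag N.-1 2 (-1).

Definition Kmat (N : nat) : 'M[R]_(N.-1) := (hmesh N)^-1 *: Tmat N.

(* S_kl = sum_m h [[phi_l']](x_m) [[phi_k']](x_m); since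
   [[phi_l']](x_m) = (1/h) T_{ml}, this is S = (1/h) T^T T = (1/h) T T
   (pentadiagonal rows (1,-4,6,-4,1), corner diagonal entries 5). *)
Definition jump (N : nat) : 'M[R]_(N.-1) := (hmesh N)^-1 *: Tmat N.
Definition Smat (N : nat) : 'M[R]_(N.-1) := hmesh N *: ((jump N)^T *m jump N).

(* Gauss-Legendre (consistent) and Gauss-Lobatto (lumped) mass matrices *)
Definition MGmat (N : nat) : 'M[R]_(N.-1) := hmesh N *: tridiag N.-1 (2/3) (1/6).
Definition MLmat (N : nat) : 'M[R]_(N.-1) := hmesh N *: 1%:M.

Definition pencil (n : nat) (A B : 'M[R]_n) : 'M[{poly R}]_n :=
  map_mx polyC A - 'X *: map_mx polyC B.

(* s is the nondecreasing list of the generalized eigenvalues of A U = x B U,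
   counted with (algebraic) multiplicity: the roots of det(A - x B). *)
Definition gen_eigs (n : nat) (A B : 'M[R]_n) (s : seq R) : Prop :=
  size s = n /\ sorted <=%R s /\
  exists c : R, c != 0 /\ \det (pencil A B) = c *: \prod_(x <- s) ('X - x%:P).

Definition softA (N : nat) (etaK : R) : 'M[R]_(N.-1) := Kmat N - etaK *: Smat N.
Definition softB (N : nat) (alpha : R) : 'M[R]_(N.-1) :=
  alpha *: MGmat N + (1 - alpha) *: MLmat N.

Definition lam_exact (j : nat) : R := (j%:R * pi) ^+ 2.

End Defs.

From HB Require Import structures.
From mathcomp Require Import all_boot all_order all_algebra.
From mathcomp Require Import reals trigo.
From mathcomp Require Import boolp functions topology normedtype derive realfun.
From mathcomp Require Import ring lra zify.
Set Implicit Arguments. Unset Strict Implicit. Unset Printing Implicit Defensive.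
Import Order.TTheory GRing.Theory Num.Theory numFieldNormedType.Exports.
Local Open Scope ring_scope.

(** With [T = tridiag(-1, 2, -1)] we have [K = T / h] and [S = T^2 / h], so every
  matrix of the pencil is a polynomial in symmetric tridiagonal Toeplitz matrices.
  The sine vectors [(sin (k theta_j))_k], [theta_j = j pi h], diagonalize all of them
  at once; hence [det (A - x B)] splits into linear factors and the [j]-th eigenvalue
  is [g (cos (j pi h)) / h^2] with [g c = 3 (1 - c) (9 + c) / (11 + 4 c)], increasing
  in [j]. For [x = j pi h < pi < 16/5], the alternating Taylor bounds of [cos x] of
  degrees 6 and 8 confine [g (cos x)] to [x^2 +- x^8 / 1440]: at these bounds the
  numerator of [g c - x^2 -+ x^8 / 1440] is [x^8] times a polynomial in [x^2] of
  constant sign on [[0, (16/5)^2]]. Dividing by [lambda_j = (x / h)^2] gives the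
  relative bound. *)

Section TaylorBounds.
Variable R : realType.
Implicit Types x : R.

Definition cos_taylor (n : nat) x : R :=
  \sum_(k < n) (-1) ^+ k * x ^+ k.*2 / (k.*2)`!%:R.
Definition sin_taylor (n : nat) x : R :=
  \sum_(k < n) (-1) ^+ k * x ^+ k.*2.+1 / (k.*2.+1)`!%:R.

Lemma ge0_of_derive_ge0 (f df : R -> R) :
  (forall x, is_derive x 1 f (df x)) -> f 0 = 0 ->
  (forall x, 0 <= x -> 0 <= df x) -> forall x, 0 <= x -> 0 <= f x.
Proof.
move=> fd f0 df_ge0 x x_ge0.
have cf : continuous f.
  by move=> y; apply/differentiable_continuous/derivable1_diffP; exact: ex_derive.
have [c /andP[c_ge0 _]] :=
  MVT_segment x_ge0 (fun y _ => fd y) (continuous_subspaceT cf).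
by rewrite f0 !subr0 => ->; rewrite mulr_ge0 ?df_ge0.
Qed.

Lemma is_derive_monomial m x :
  is_derive x 1 (fun y : R => y ^+ m.+1 / (m.+1)`!%:R) (x ^+ m / m`!%:R).
Proof.
have -> : (fun y : R => y ^+ m.+1 / (m.+1)`!%:R) = (m.+1)`!%:R^-1 \*: (@id R ^+ m.+1).
  by apply/funext => y; rewrite /= exprfctE mulrC.
apply: is_derive_eq.
rewrite factS natrM /= -[_%:A]/(_ * 1) mulr1 -[_ *: _]/(_ * _).
by field; rewrite pnatr_eq0 -lt0n fact_gt0 addrC natr1 pnatr_eq0.
Qed.

Global Instance is_derive_sin_taylor n x : is_derive x 1 (sin_taylor n) (cos_taylor n x).
Proof.
have -> : sin_taylor n = \sum_(k < n) (fun y => (-1) ^+ k * (y ^+ k.*2.+1 / (k.*2.+1)`!%:R)).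
  by apply/funext => y; rewrite fct_sumE; apply: eq_bigr => k _; rewrite mulrA.
rewrite /cos_taylor; apply: is_derive_sum => k.
by rewrite -mulrA; apply: is_deriveZ; apply: is_derive_monomial.
Qed.

Global Instance is_derive_cos_taylor n x :
  is_derive x 1 (cos_taylor n.+1) (- sin_taylor n x).
Proof.
have -> : cos_taylor n.+1 = cst 1 + \sum_(k < n)
    (fun y => - ((-1) ^+ k * (y ^+ k.*2.+2 / (k.*2.+2)`!%:R))).
  apply/funext => y; rewrite /cos_taylor big_ord_recl fct_sumE /=.
  rewrite /= expr0 mul1r divr1; congr (_ + _); apply: eq_bigr => k _.
  by rewrite /bump leq0n add1n exprS mulN1r -mulrA mulNr.
rewrite /sin_taylor -sumrN -[X in is_derive _ _ _ X]add0r.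
apply: is_deriveD; apply: is_derive_sum => k.
rewrite -mulrA; apply: is_deriveN; apply: is_deriveZ; apply: is_derive_monomial.
Qed.

Lemma sin_taylor0 n : sin_taylor n 0 = 0.
Proof. by rewrite /sin_taylor big1 // => k _; rewrite expr0n mulr0 mul0r. Qed.

Lemma cos_taylor0 n : cos_taylor n.+1 0 = 1.
Proof.
rewrite /cos_taylor big_ord_recl big1 ?addr0 => [|k _]; first by rewrite /= mulr1 divr1.
by rewrite lift0 doubleS expr0n mulr0 mul0r.
Qed.

Lemma sin_taylor_alt_of_cos n :
    (forall x, 0 <= x -> 0 <= (-1) ^+ n.+1 * (cos x - cos_taylor n.+1 x)) ->
  forall x, 0 <= x -> 0 <= (-1) ^+ n.+1 * (sin x - sin_taylor n.+1 x).
Proof.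
move=> cos_alt; apply: ge0_of_derive_ge0 cos_alt.
by rewrite sin0 sin_taylor0 subrr mulr0.
Qed.

Lemma cos_taylor_alt n x : 0 <= x -> 0 <= (-1) ^+ n.+1 * (cos x - cos_taylor n.+1 x).
Proof.
elim: n x => [|n IH] x.
  by rewrite expr1 mulN1r oppr_ge0 subr_le0 /cos_taylor big_ord1 /= mulr1 divr1 cos_le1.
move: x; apply: (ge0_of_derive_ge0
  (df := fun y => (-1) ^+ n.+1 * (sin y - sin_taylor n.+1 y))) => [y||].
- by apply: is_derive_eq; rewrite exprS -![_ *: _]/(_ * _); ring.
- by rewrite cos0 cos_taylor0 subrr mulr0.
- exact: sin_taylor_alt_of_cos.
Qed.

Lemma cos_le_taylor4 x : 0 <= x -> cos x <= 1 - x ^+ 2 / 2 + x ^+ 4 / 24.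
Proof.
by move=> /(cos_taylor_alt 2); rewrite /cos_taylor !big_ord_recr big_ord0 /= !factS fact0; lra.
Qed.

Lemma taylor6_le_cos x : 0 <= x -> 1 - x ^+ 2 / 2 + x ^+ 4 / 24 - x ^+ 6 / 720 <= cos x.
Proof.
by move=> /(cos_taylor_alt 3); rewrite /cos_taylor !big_ord_recr big_ord0 /= !factS fact0; lra.
Qed.

Lemma cos_le_taylor8 x :
  0 <= x -> cos x <= 1 - x ^+ 2 / 2 + x ^+ 4 / 24 - x ^+ 6 / 720 + x ^+ 8 / (720 * 56).
Proof.
by move=> /(cos_taylor_alt 4); rewrite /cos_taylor !big_ord_recr big_ord0 /= !factS fact0 !natrM; lra.
Qed.

Lemma pi_lt_16_5 : pi < 16 / 5 :> R.
Proof.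
rewrite ltNge; apply/negP => pi_ge.
have : 0 <= cos (8 / 5 : R) by apply: cos_ge0_pihalf; lra.
have := cos_le_taylor4 (_ : 0 <= 8 / 5 :> R); lra.
Qed.

End TaylorBounds.

Section Dispersion.
Variable R : realFieldType.
Implicit Types (c y A : R).

Definition dispersion c : R := 3 * (1 - c) * (9 + c) / (11 + 4 * c).

Definition dispersion_gap A c : R := 3 * (1 - c) * (9 + c) - A * (11 + 4 * c).

Lemma dispersion_ltE A c : -1 <= c -> (dispersion c < A) = (dispersion_gap A c < 0).
Proof. by move=> c_ge; rewrite ltr_pdivrMr /dispersion_gap ?subr_lt0 //; lra. Qed.

Lemma dispersion_gtE A c : -1 <= c -> (A < dispersion c) = (0 < dispersion_gap A c).
Proof. by move=> c_ge; rewrite ltr_pdivlMr /dispersion_gap ?subr_gt0 //; lra. Qed.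

Lemma dispersion_gap_decr A c1 c2 : 0 <= A -> -8 <= c1 + c2 -> c1 <= c2 ->
  dispersion_gap A c2 <= dispersion_gap A c1.
Proof.
move=> A_ge0 c12 le_c12; rewrite -subr_le0.
have -> : dispersion_gap A c2 - dispersion_gap A c1 =
    (c2 - c1) * (- 3 * (c1 + c2) - 24 - 4 * A).
  by rewrite /dispersion_gap; ring.
by rewrite mulr_ge0_le0 ?subr_ge0 //; lra.
Qed.

Lemma dispersion_decr c1 c2 : -1 <= c1 -> c1 < c2 -> c2 <= 1 ->
  dispersion c2 < dispersion c1.
Proof.
move=> c1_ge c12 c2_le; rewrite -subr_gt0.
have d1 : 0 < 11 + 4 * c1 by lra.
have d2 : 0 < 11 + 4 * c2 by lra.
have -> : dispersion c1 - dispersion c2 =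
    3 * (c2 - c1) * (124 + 11 * (c1 + c2) + 4 * c1 * c2) / ((11 + 4 * c1) * (11 + 4 * c2)).
  by rewrite /dispersion; field; rewrite !gt_eqF.
rewrite divr_gt0 ?mulr_gt0 //; first lra.
have : -1 <= c1 * c2 by nra.
lra.
Qed.

Lemma cube_le_1074 y : 0 <= y -> y <= 256 / 25 -> y ^+ 3 <= 1074.
Proof.
move=> y_ge0 y_le; apply: le_trans (lerXn2r 3 _ _ y_le) _; rewrite ?nnegrE //; lra.
Qed.

(* [dispersion_gap] is monotone in [c] on the relevant range, so it suffices to
   evaluate it at the two Taylor bounds of [cos]; large constants are split so that
   their unary [nat] numerals stay small. *)
Lemma dispersion_err y c : 0 < y -> y <= 256 / 25 ->
    1 - y / 2 + y ^+ 2 / 24 - y ^+ 3 / 720 <= c ->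
    c <= 1 - y / 2 + y ^+ 2 / 24 - y ^+ 3 / 720 + y ^+ 4 / (720 * 56) -> -1 <= c ->
  `|dispersion c - y| < y ^+ 4 / 1440.
Proof.
set lo := 1 - y / 2 + y ^+ 2 / 24 - y ^+ 3 / 720.
set hi := lo + _ => y_gt0 y_le c_lo c_hi c_ge.
have y3_le := cube_le_1074 (ltW y_gt0) y_le.
have y4_gt0 : 0 < y ^+ 4 by rewrite exprn_gt0.
have lo_ge : -7 <= lo by rewrite /lo; have := sqr_ge0 y; lra.
have hint : 0 <= y * (256 / 25 - y) by apply: mulr_ge0; lra.
have upper : dispersion c < y + y ^+ 4 / 1440.
  rewrite dispersion_ltE //; apply: le_lt_trans (dispersion_gap_decr _ _ c_lo) _.
  - by apply: addr_ge0; [exact: ltW | apply: divr_ge0; lra].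
  - lra.
  have -> : dispersion_gap (y + y ^+ 4 / 1440) lo =
      - (y ^+ 4 * (7380 - 900 * y + 63 * y ^+ 2 - 2 * y ^+ 3)) / (720 * 720).
    by rewrite /dispersion_gap /lo; field.
  rewrite mulNr oppr_lt0 divr_gt0 ?mulr_gt0 //; nra.
have lower : y - y ^+ 4 / 1440 < dispersion c.
  rewrite dispersion_gtE //; apply: lt_le_trans (dispersion_gap_decr _ _ c_hi).
  - have -> : dispersion_gap (y - y ^+ 4 / 1440) hi = y ^+ 4 * ((9515 * 1000 + 520)
        - (1733 * 1000 + 760) * y + (168 * 1000 + 672) * y ^+ 2 - 5936 * y ^+ 3
        + 109 * y ^+ 4) / (720 * 720 * 56 * 56).
      by rewrite /dispersion_gap /hi /lo; field.
    rewrite divr_gt0 ?mulr_gt0 //; nra.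
  - rewrite subr_ge0 ler_pdivrMr ?exprS ?ler_pM2l //; lra.
  - lra.
rewrite ltr_norml; apply/andP; split; lra.
Qed.

End Dispersion.

Section Pencil.
Variables (R : realType) (n : nat).
Implicit Types (A B Q : 'M[R]_n) (a b : 'rV[R]_n).

Lemma det_pencil_codiag Q A B a b : \det Q != 0 ->
    Q *m A = diag_mx a *m Q -> Q *m B = diag_mx b *m Q ->
  \det (pencil A B) = \prod_j ((a 0 j)%:P - 'X * (b 0 j)%:P).
Proof.
move=> detQ QA QB; pose Qp := map_mx polyC Q.
have QpE : Qp *m pencil A B = diag_mx (\row_j ((a 0 j)%:P - 'X * (b 0 j)%:P)) *m Qp.
  rewrite /pencil mulmxBr -scalemxAr -!map_mxM QA QB !map_mxM !map_diag_mx.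
  rewrite scalemxAl -mulmxBl; congr (_ *m _); apply/matrixP => i j; rewrite !mxE.
  by case: (i == j); rewrite ?mulr1n ?mulr0n ?mulr0 ?subr0.
have detQp : \det Qp != 0 by rewrite det_map_mx polyC_eq0.
move/(congr1 determinant): QpE; rewrite !det_mulmx det_diag [LHS]mulrC.
by move/(mulIf detQp) => ->; apply: eq_bigr => j _; rewrite mxE.
Qed.

Lemma gen_eigs_codiag Q A B a b : \det Q != 0 ->
    Q *m A = diag_mx a *m Q -> Q *m B = diag_mx b *m Q -> (forall j, b 0 j != 0) ->
  gen_eigs A B (sort <=%R [seq a 0 j / b 0 j | j <- enum 'I_n]).
Proof.
move=> detQ QA QB b_neq0; split; first by rewrite size_sort size_map size_enum_ord.
split; first exact: (sort_sorted le_total).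
exists (\prod_j - b 0 j); split; first by apply/prodf_neq0 => j _; rewrite oppr_eq0.
rewrite (det_pencil_codiag detQ QA QB) (perm_big _ (permEl (perm_sort _ _))) big_map big_enum /=.
rewrite -scaler_prod; apply: eq_bigr => j _.
rewrite -mul_polyC mulrBr -polyCM mulNr mulrCA divff // mulr1 !polyCN.
by rewrite opprK mulrC mulNr addrC.
Qed.

Lemma gen_eigs_uniq A B s1 s2 : gen_eigs A B s1 -> gen_eigs A B s2 -> s1 = s2.
Proof.
move=> [_ [sorted1 [c1 [c1_neq0 det1]]]] [_ [sorted2 [c2 [c2_neq0 det2]]]].
have E := etrans (esym det1) det2.
have c12 : c1 = c2.
  by move/(congr1 lead_coef): E; rewrite !lead_coefZ !lead_coef_prod_XsubC !mulr1.
move: E; rewrite c12 => /(scalerI c2_neq0)/prod_XsubC_eq.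
exact: (sorted_eq le_trans le_anti).
Qed.

End Pencil.

Lemma comm_diag_mx_eq0 (R : idomainType) (n : nat) (d : 'rV[R]_n) (M : 'M[R]_n) i j :
  diag_mx d *m M = M *m diag_mx d -> d 0 i != d 0 j -> M i j = 0.
Proof.
move=> /(congr1 (fun A : 'M[R]_n => A i j)); rewrite mul_diag_mx mul_mx_diag !mxE => dM dij.
have : (d 0 i - d 0 j) * M i j = 0 by rewrite mulrBl dM mulrC subrr.
by move/eqP; rewrite mulf_eq0 subr_eq0 (negPf dij) => /eqP.
Qed.

Section SineBasis.
Variables (R : realType) (n : nat).
Local Notation h := (hmesh R n.+1).

Lemma sum_tridiag_mul (a b : R) (f : nat -> R) (k : 'I_n) :
    f 0%N = 0 -> f n.+1 = 0 ->
  \sum_(l < n) f l.+1 * tridiag n a b l k = a * f k.+1 + b * (f k + f k.+2).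
Proof.
move=> f0 fn; pose d (l m : nat) : R := (l == m)%:R.
have dsum m : \sum_(l < n) f l.+1 * d l m = if (m < n)%N then f m.+1 else 0.
  rewrite -(big_ord1_eq +%R (fun l => f l.+1) m n) [RHS]big_mkcond.
  apply: eq_bigr => l _ /=.
  by rewrite /d; case: eqP => _; rewrite ?mulr1 ?mulr0.
have entry l : tridiag n a b l k = a * d l k + b * d l k.+1 + b * d k l.+1.
  rewrite mxE /d -val_eqE /=; case: eqP => e1; case: eqP => e2; case: eqP => e3 /=;
    rewrite ?mulr1 ?mulr0 ?addr0 ?add0r //; lia.
under eq_bigr => l _ do rewrite entry !mulrDr ![f _ * (_ * _)]mulrCA.
rewrite !big_split /= -!mulr_sumr !dsum ltn_ord.
have -> : (if (k.+1 < n)%N then f k.+2 else 0) = f k.+2.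
  by case: ltnP => // kn; have -> : k.+2 = n.+1 by have := ltn_ord k; lia.
suff -> : \sum_(l < n) f l.+1 * d k l.+1 = f k by ring.
clear entry; case: k => [[|m] mn] /=; first by rewrite f0 big1 // => l _; rewrite /d mulr0.
under eq_bigr => l _ do rewrite /d eqSS eq_sym -/(d l m).
by rewrite dsum (ltn_trans (ltnSn m) mn).
Qed.

(* Modes are indexed from 0: [theta j] is the angle of the [j.+1]-th eigenvector. *)
Definition theta (j : nat) : R := j.+1%:R * pi * h.

Definition sine_mx : 'M[R]_n := \matrix_(j, k) sin (k.+1%:R * theta j).

Lemma hmesh_gt0 : 0 < h.
Proof. by rewrite invr_gt0 ltr0n. Qed.

Lemma theta_gt0 j : 0 < theta j.
Proof. by rewrite !mulr_gt0 ?pi_gt0 ?hmesh_gt0 ?ltr0n. Qed.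

Lemma theta_lt_pi j : (j < n)%N -> theta j < pi.
Proof.
move=> jn; rewrite /theta mulrAC -[ltRHS]mul1r ltr_pM2r ?pi_gt0 //.
by rewrite ltr_pdivrMr ?ltr0n // mul1r ltr_nat ltnS.
Qed.

Lemma sin_theta_end j : sin (n.+1%:R * theta j) = 0.
Proof.
have -> : n.+1%:R * theta j = j.+1%:R * pi.
  by rewrite /theta mulrCA divff ?mulr1 // pnatr_eq0.
elim: j.+1 => [|m IH]; first by rewrite mul0r sin0.
by rewrite -natr1 mulrDl mul1r sinDpi IH oppr0.
Qed.

Lemma sine_mx_tridiag (a b : R) :
  sine_mx *m tridiag n a b = diag_mx (\row_j (a + 2 * b * cos (theta j))) *m sine_mx.
Proof.
apply/matrixP => j k; rewrite mul_diag_mx !mxE.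
under eq_bigr => l _ do rewrite mxE.
rewrite (sum_tridiag_mul a b (f := fun m => sin (m%:R * theta j))) ?mul0r ?sin0 //; last first.
  exact: sin_theta_end.
have -> : k%:R * theta j = k.+1%:R * theta j - theta j by rewrite -natr1; ring.
have -> : k.+2%:R * theta j = k.+1%:R * theta j + theta j by rewrite -(natr1 k.+1); ring.
rewrite sinB sinD; ring.
Qed.

Lemma tridiag_tr (a b : R) : (tridiag n a b)^T = tridiag n a b.
Proof. by apply/matrixP => i j; rewrite !mxE eq_sym orbC. Qed.

Lemma cos_theta_inj : injective (fun j : 'I_n => cos (theta j)).
Proof.
move=> i j /= /cos_inj; rewrite !in_itv /= !ltW ?theta_gt0 ?theta_lt_pi //.
move/(_ isT isT)/(mulIf (lt0r_neq0 hmesh_gt0))/(mulIf (lt0r_neq0 (pi_gt0 R))).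
by move/eqP; rewrite eqr_nat eqSS => /eqP/val_inj.
Qed.

(* [Q Q^T] commutes with the diagonal matrix of the distinct [cos (theta j)], so it
   is diagonal, and its diagonal entries are sums of squares. *)
Lemma det_sine_mx_neq0 : \det sine_mx != 0.
Proof.
set Q := sine_mx; set G := Q *m Q^T.
pose c : 'rV[R]_n := \row_j (0 + 2 * (1 / 2) * cos (theta j)).
have QT : Q *m tridiag n 0 (1 / 2) = diag_mx c *m Q := sine_mx_tridiag 0 (1 / 2).
have cG : diag_mx c *m G = G *m diag_mx c.
  rewrite /G mulmxA -QT -mulmxA -[tridiag _ _ _]tridiag_tr -trmx_mul QT.
  by rewrite trmx_mul tr_diag_mx mulmxA.
have G_trig : is_trig_mx G.
  apply/is_trig_mxP => i j ij; apply: (comm_diag_mx_eq0 cG).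
  rewrite !mxE mul1r divff ?pnatr_eq0 // !mul1r !add0r.
  by apply: contraTneq ij => /cos_theta_inj ->; rewrite ltnn.
have Gii_gt0 i : 0 < G i i.
  rewrite /G mxE; have n_gt0 : (0 < n)%N by case: i => i; case: n.
  rewrite (bigD1 (Ordinal n_gt0)) //= !mxE -expr2 ltr_pwDl ?exprn_gt0 //.
    by rewrite mul1r sin_gt0_pi // theta_gt0 theta_lt_pi.
  by apply: sumr_ge0 => k _; rewrite !mxE -expr2 sqr_ge0.
have : 0 < \det G by rewrite (det_trig G_trig) prodr_gt0.
by rewrite /G det_mulmx det_tr; apply: contraTneq => ->; rewrite mul0r ltxx.
Qed.

Lemma softA_Tmat eta :
  softA n.+1 eta = h^-1 *: (Tmat R n.+1 - eta *: (Tmat R n.+1 *m Tmat R n.+1)).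
Proof.
have TT : (Tmat R n.+1)^T = Tmat R n.+1 := tridiag_tr 2 (-1).
rewrite /softA /Kmat /Smat /jump [(_ *: _)^T]linearZ /= TT -scalemxAl -scalemxAr.
rewrite !scalerA scalerBr scalerA; congr (_ - _ *: _).
by field; exact: lt0r_neq0 hmesh_gt0.
Qed.

Lemma sine_mx_softA eta :
  sine_mx *m softA n.+1 eta =
  diag_mx (\row_j ((2 - 2 * cos (theta j)) * (1 - eta * (2 - 2 * cos (theta j))) / h))
    *m sine_mx.
Proof.
have QT := sine_mx_tridiag 2 (-1).
rewrite softA_Tmat -scalemxAr mulmxBr -scalemxAr mulmxA QT -mulmxA QT mulmxA.
rewrite mulmx_diag scalemxAl -mulmxBl scalemxAl; congr (_ *m _).
apply/matrixP => i j; rewrite !mxE; case: (i == j); rewrite ?mulr1n ?mulr0n.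
  by field; exact: lt0r_neq0 hmesh_gt0.
by rewrite !(mulr0, subr0).
Qed.

Lemma sine_mx_softB alpha :
  sine_mx *m softB n.+1 alpha =
  diag_mx (\row_j (h * (alpha * (2 + cos (theta j)) / 3 + (1 - alpha)))) *m sine_mx.
Proof.
have QM := sine_mx_tridiag (2 / 3) (1 / 6).
rewrite /softB /MGmat /MLmat mulmxDr -!scalemxAr QM mulmx1.
rewrite -[X in _ + _ *: (_ *: X)]mul1mx !scalemxAl -mulmxDl; congr (_ *m _).
rewrite !scalerA -diag_const_mx -!linearZ -linearD /=; congr diag_mx; apply/rowP => j.
by rewrite !mxE; field.
Qed.

End SineBasis.

Lemma dispersion_cos_rel_err (R : realType) (x : R) : 0 < x -> x <= 16 / 5 ->
  `|dispersion (cos x) - x ^+ 2| / x ^+ 2 < x ^+ 6 / 1440.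
Proof.
move=> x_gt0 x_le; have x2_gt0 : 0 < x ^+ 2 by rewrite exprn_gt0.
have x2_le : x ^+ 2 <= 256 / 25.
  by apply: le_trans (lerXn2r 2 _ _ x_le) _; rewrite ?nnegrE; lra.
have -> : x ^+ 6 / 1440 = (x ^+ 2) ^+ 4 / 1440 / x ^+ 2.
  by rewrite -exprM; field; rewrite gt_eqF.
rewrite ltr_pM2r ?invr_gt0 //; apply: dispersion_err; rewrite -?exprM //.
- exact: taylor6_le_cos (ltW x_gt0).
- exact: cos_le_taylor8 (ltW x_gt0).
- exact: cos_geN1.
Qed.

Lemma rel_err_scale (R : realFieldType) (g y h : R) : h != 0 -> y != 0 ->
  `|g / h ^+ 2 - y ^+ 2| / y ^+ 2 = `|g - (y * h) ^+ 2| / (y * h) ^+ 2.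
Proof.
move=> h_neq0 y_neq0; rewrite exprMn.
have -> : g / h ^+ 2 - y ^+ 2 = (g - y ^+ 2 * h ^+ 2) / h ^+ 2 by field.
rewrite normrM normfV (ger0_norm (sqr_ge0 h)).
by field; rewrite h_neq0 y_neq0.
Qed.

Section SoftFEMBQ.
Variables (R : realType) (n : nat).
Local Notation h := (hmesh R n.+1).
Local Notation theta := (theta R n).

Lemma softfem_eig_ratio c : -1 <= c ->
    (2 - 2 * c) * (1 - 1 / 20 * (2 - 2 * c)) / h / (h * (4 / 5 * (2 + c) / 3 + (1 - 4 / 5)))
  = dispersion c / h ^+ 2.
Proof.
move=> c_ge; rewrite /dispersion; field.
by rewrite lt0r_neq0 ?hmesh_gt0 //= !gt_eqF //; lra.
Qed.

Definition softfem_eigs : seq R := [seq dispersion (cos (theta j)) / h ^+ 2 | j <- iota 0 n].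

Lemma softfem_eigs_sorted : sorted <=%R softfem_eigs.
Proof.
rewrite sorted_map; apply: (@sub_in_sorted _ (fun i => (i < n)%N) ltn); last first.
- exact: iota_ltn_sorted.
- by apply/allP => i; rewrite mem_iota add0n.
move=> i j /= i_lt j_lt ij; rewrite ler_pM2r ?invr_gt0 ?exprn_gt0 ?hmesh_gt0 //.
have theta_in k : (k < n)%N -> theta k \in `[0, pi].
  by move=> k_lt; rewrite in_itv /= ltW ?theta_gt0 ?ltW ?theta_lt_pi.
apply/ltW/dispersion_decr; rewrite ?cos_geN1 ?cos_le1 ?ltr_cos ?theta_in //.
by rewrite /theta ltr_pM2r ?hmesh_gt0 // ltr_pM2r ?pi_gt0 // ltr_nat ltnS.
Qed.

Lemma gen_eigs_softfem : gen_eigs (softA n.+1 (1 / 20)) (softB n.+1 (4 / 5)) softfem_eigs.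
Proof.
have b_neq0 (j : 'I_n) : (\row_k (h * (4 / 5 * (2 + cos (theta k)) / 3 + (1 - 4 / 5)))) 0 j != 0.
  by rewrite mxE lt0r_neq0 ?mulr_gt0 ?hmesh_gt0 //; have := cos_geN1 (theta j); lra.
have := gen_eigs_codiag (@det_sine_mx_neq0 R n) (@sine_mx_softA R n (1 / 20))
  (@sine_mx_softB R n (4 / 5)) b_neq0.
set l := map _ _; suff -> : l = softfem_eigs.
  by rewrite sorted_sort ?softfem_eigs_sorted //; exact: le_trans.
rewrite /l /softfem_eigs -val_enum_ord -map_comp; apply: eq_map => j /=.
by rewrite !mxE softfem_eig_ratio ?cos_geN1.
Qed.

End SoftFEMBQ.

Theorem theorem2 (R : realType) (N : nat) (hN : (2 <= N)%N) :
  (exists s : seq R, gen_eigs (softA N (1/20)) (softB N (4/5)) s) /\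
  forall s : seq R, gen_eigs (softA N (1/20)) (softB N (4/5)) s ->
  forall j : nat, (1 <= j <= N.-1)%N ->
    `|s`_j.-1 - lam_exact R j| / lam_exact R j
      < (j%:R * pi * hmesh R N) ^+ 6 / 1440.
Proof.
case: N hN => [//|n] _; split; first by exists (softfem_eigs R n); exact: gen_eigs_softfem.
move=> s /(gen_eigs_uniq (gen_eigs_softfem R n)) <- j /andP[j_ge1 j_le].
have j_lt : (j.-1 < n)%N by rewrite prednK.
rewrite /softfem_eigs (nth_map 0%N) ?size_iota // nth_iota // add0n.
have thetaE : theta R n j.-1 = j%:R * pi * hmesh R n.+1 by rewrite /theta prednK.
have x_gt0 := @theta_gt0 R n j.-1.
rewrite /lam_exact rel_err_scale ?lt0r_neq0 ?hmesh_gt0 -?thetaE //.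
  apply: dispersion_cos_rel_err => //.
  by apply/ltW/(lt_trans (@theta_lt_pi R n _ j_lt)); exact: pi_lt_16_5.
by rewrite mulr_gt0 ?pi_gt0 // ltr0n.
Qed.
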